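(* Let $\mathcal X=\mathbb C^n$. For every strictly convex function $F:\mathrm{Dens}(\mathcal X)\to\mathbb R$, regarded as a quantum property, $\mathrm{elic}_Q(F)=n^2-1$.
   Context: $\mathrm{Herm}(\mathcal X)$ Hermitian matrices with $\langle X,Y\rangle=\mathrm{Tr}(X^*Y)$; $\mathrm{Dens}(\mathcal X)$ density matrices. A quantum property is a map $\Gamma:\mathrm{Dens}(\mathcal X)\to\mathcal R$. It is elicitable if there is a quantum score $S=(s,\mu)$, $s:\mathcal R\times\mathbb N\to\mathbb R$, $\mu(r)$ a measurement (finite family of positive semidefinite operators summing to $I$), with $\{\Gamma(\rho)\}=\arg\max_{r\in\mathcal R}\sum_y\langle\mu(r)_y,\rho\rangle s(r,y)$ for all $\rho$. $\hat\Gamma:\mathrm{Dens}(\mathcal X)\to\mathbb R^k$ is identifiable if for each $r$ in its range there is $V(r)\in\mathrm{Herm}(\mathcal X)^k$ with $\hat\Gamma(\rho)=r\iff\langle V(r)_i,\rho\rangle=0$ for all $i$. $\Gamma$ is $k$-elicitable if $\Gamma=\psi\circ\hat\Gamma$ for some elicitable and identifiable $\hat\Gamma:\mathrm{Dens}(\mathcal X)\to\mathbb R^k$ and some $\psi:\mathbb R^k\to\mathcal R$; $\mathrm{elic}_Q(\Gamma)$ is the least such $k$. *)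

From HB Require Import structures.
From mathcomp Require Import all_boot all_order all_algebra.
From mathcomp Require Import reals.
From mathcomp Require Import complex.

Set Implicit Arguments.
Unset Strict Implicit.
Unset Printing Implicit Defensive.

Import Order.TTheory GRing.Theory Num.Theory.
Local Open Scope ring_scope.

Section QuantumElicitation.
Variable R : realType.
Variable n : nat.

Notation Mat := 'M[R[i]]_n.

Definition adjmx (p q : nat) (A : 'M[R[i]]_(p, q)) : 'M[R[i]]_(q, p) :=
  (map_mx conjc A)^T.

Definition hermitian (A : Mat) : Prop := adjmx A = A.

Definition psd (A : Mat) : Prop :=
  hermitian A /\ forall v : 'cV[R[i]]_n, 0 <= (adjmx v *m A *m v) 0 0.

Definition density (rho : Mat) : Prop := psd rho /\ \tr rho = 1.

Definition hs_inner (X Y : Mat) : R[i] := \tr (adjmx X *m Y).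

(* A measurement: finite family (mu_y)_{y < size mu} of PSD operators
   summing to the identity; outcomes y are natural numbers. *)
Definition measurement (mu : seq Mat) : Prop :=
  (forall y, (y < size mu)%N -> psd (nth 0 mu y)) /\
  \sum_(y < size mu) nth 0 mu y = 1%:M.

(* Expected quantum score  sum_y <mu(r)_y, rho> s(r, y)  (a real number,
   since <mu(r)_y, rho> is real for Hermitian mu(r)_y and rho). *)
Definition expected_score (RR : Type) (s : RR -> nat -> R)
  (mu : RR -> seq Mat) (r : RR) (rho : Mat) : R :=
  \sum_(y < size (mu r)) complex.Re (hs_inner (nth 0 (mu r) y) rho) * s r y.

(* Quantum properties Gamma : Dens(X) -> RR are encoded as functions on all
   matrices; only their values on density matrices matter below. *)

Definition elicitable (RR : Type) (Gamma : Mat -> RR) : Prop :=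
  exists (s : RR -> nat -> R) (mu : RR -> seq Mat),
    (forall r, measurement (mu r)) /\
    forall rho, density rho ->
      forall r : RR,
        (forall r' : RR, expected_score s mu r' rho <= expected_score s mu r rho)
        <-> r = Gamma rho.

Definition identifiable (k : nat) (Ghat : Mat -> 'rV[R]_k) : Prop :=
  forall r : 'rV[R]_k, (exists rho0, density rho0 /\ Ghat rho0 = r) ->
    exists V : 'I_k -> Mat,
      (forall i, hermitian (V i)) /\
      forall rho, density rho ->
        (Ghat rho = r <-> forall i, hs_inner (V i) rho = 0).

Definition k_elicitable (RR : Type) (Gamma : Mat -> RR) (k : nat) : Prop :=
  exists (Ghat : Mat -> 'rV[R]_k) (psi : 'rV[R]_k -> RR),
    elicitable Ghat /\ identifiable Ghat /\
    forall rho, density rho -> Gamma rho = psi (Ghat rho).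

Definition elicQ_is (RR : Type) (Gamma : Mat -> RR) (m : nat) : Prop :=
  k_elicitable Gamma m /\ forall k, k_elicitable Gamma k -> (m <= k)%N.

Definition strictly_convex (F : Mat -> R) : Prop :=
  forall (rho sigma : Mat) (t : R),
    density rho -> density sigma -> rho <> sigma -> 0 < t < 1 ->
    F ((t%:C)%C *: rho + ((1 - t)%:C)%C *: sigma) < t * F rho + (1 - t) * F sigma.

End QuantumElicitation.

(* Upper bound: the coordinates Re <W_ab, rho> of rho in a Hermitian basis of
   Herm(C^n), minus one diagonal coordinate that Tr rho = 1 determines, give an
   injective map G from densities to R^(n^2-1).  It is identifiable (through
   the affine constraints <W_ab - r_ab I, rho> = 0) and elicitable (measure
   1/2 (I +- e A_r) with A_r = sum_ab 2 r_ab W_ab and pay +-1/e - |r|^2; the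
   expected score is |G rho|^2 - |G rho - r|^2), so every property, F
   included, factors through G.
   Lower bound: if F = psi o G' with G' identifiable in dimension k < n^2 - 1,
   then the k constraints at the maximally mixed state I/n, together with the
   trace, leave a nonzero traceless Hermitian direction D along which G', hence
   F, is constant near I/n, contradicting strict convexity at a midpoint. *)

From Pilot Require Import Defs.
From HB Require Import structures.
From mathcomp Require Import all_boot all_order all_algebra.
From mathcomp Require Import reals complex ring lra zify.
From Stdlib Require Import ClassicalEpsilon.
(* Re-imported so that [hermitian] means [Defs.hermitian], not the one of sesquilinear. *)
Import Defs.
Import Order.TTheory GRing.Theory Num.Theory.
Local Open Scope ring_scope.

Set Implicit Arguments.
Unset Strict Implicit.
Unset Printing Implicit Defensive.

Section ComplexFacts.
Variable R : realType.
Implicit Types (z : R[i]) (x : R).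

Lemma complex_ext z w :
  complex.Re z = complex.Re w -> complex.Im z = complex.Im w -> z = w.
Proof. by case: z; case: w => /= a b c d -> ->. Qed.

Lemma Re_realCM x z : complex.Re (x%:C%C * z) = x * complex.Re z.
Proof. by case: z => a b /=; ring. Qed.

Lemma Im_realCM x z : complex.Im (x%:C%C * z) = x * complex.Im z.
Proof. by case: z => a b /=; ring. Qed.

Lemma conjc_fixed_Im z : z^*%C = z -> complex.Im z = 0.
Proof. by case: z => a b /= [] hb; lra. Qed.

Lemma conjci : ('i%C : R[i])^*%C = - 'i%C.
Proof. by apply: complex_ext => /=; rewrite ?oppr0. Qed.

End ComplexFacts.

Lemma ord_ltn_eqF m (i j : 'I_m) : (i < j)%N -> (i == j) = false.
Proof. by move=> ij; rewrite -val_eqE /= ltn_eqF. Qed.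

Lemma ord_gtn_eqF m (i j : 'I_m) : (j < i)%N -> (i == j) = false.
Proof. by move=> ji; rewrite eq_sym ord_ltn_eqF. Qed.

Section Adjoint.
Variable R : realType.

Lemma adjmx_is_zmod_morphism p q : zmod_morphism (@adjmx R p q).
Proof. by move=> A B; apply/matrixP => i j; rewrite !mxE rmorphB. Qed.

HB.instance Definition _ p q := GRing.isZmodMorphism.Build
  'M[R[i]]_(p, q) 'M[R[i]]_(q, p) (@adjmx R p q) (@adjmx_is_zmod_morphism p q).

Lemma adjmxZ p q z (A : 'M[R[i]]_(p, q)) : adjmx (z *: A) = z^*%C *: adjmx A.
Proof. by apply/matrixP => i j; rewrite !mxE rmorphM. Qed.

Lemma adjmxM p q r (A : 'M[R[i]]_(p, q)) (B : 'M[R[i]]_(q, r)) :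
  adjmx (A *m B) = adjmx B *m adjmx A.
Proof. by rewrite /adjmx map_mxM trmx_mul. Qed.

Lemma adjmx_delta p q (a : 'I_p) (b : 'I_q) : adjmx (delta_mx a b : 'M[R[i]]_(p, q)) = delta_mx b a.
Proof. by apply/matrixP => i j; rewrite !mxE conjc_nat andbC. Qed.

Lemma adjmx1 n : adjmx (1%:M : 'M[R[i]]_n) = 1%:M.
Proof. by apply/matrixP => i j; rewrite !mxE eq_sym conjc_nat. Qed.

Variable n : nat.
Notation Mat := 'M[R[i]]_n.
Implicit Types (A B : Mat).

Lemma hs_inner_is_linear A : linear (hs_inner A).
Proof. by move=> a B C; rewrite /hs_inner mulmxDr -scalemxAr linearD linearZ. Qed.

HB.instance Definition _ A := GRing.isLinear.Build R[i] Mat R[i] *%R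
  (hs_inner A) (hs_inner_is_linear A).

Lemma mxtrace_adjmx A : \tr (adjmx A) = (\tr A)^*%C.
Proof. by rewrite mxtrace_tr (trace_map_mx conjc). Qed.

Lemma hs_innerDl A B C : hs_inner (A + B) C = hs_inner A C + hs_inner B C.
Proof. by rewrite /hs_inner raddfD mulmxDl mxtraceD. Qed.

Lemma hs_innerBl A B C : hs_inner (A - B) C = hs_inner A C - hs_inner B C.
Proof. by rewrite /hs_inner raddfB mulmxBl linearB. Qed.

Lemma hs_innerZl z A B : hs_inner (z *: A) B = z^*%C * hs_inner A B.
Proof. by rewrite /hs_inner adjmxZ -scalemxAl mxtraceZ. Qed.

Lemma hs_inner_suml (I : Type) (r : seq I) (P : pred I) (f : I -> Mat) B :
  hs_inner (\sum_(i <- r | P i) f i) B = \sum_(i <- r | P i) hs_inner (f i) B.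
Proof. by rewrite /hs_inner raddf_sum mulmx_suml raddf_sum. Qed.

Lemma hs_inner1l B : hs_inner 1%:M B = \tr B.
Proof. by rewrite /hs_inner adjmx1 mul1mx. Qed.

Lemma hs_inner_delta a b B : hs_inner (delta_mx a b) B = B a b.
Proof.
rewrite /hs_inner adjmx_delta /mxtrace (bigD1 b) //= big1 ?addr0 => [|i ib].
  rewrite mxE (bigD1 a) //= big1 ?addr0 => [|j /negPf ja]; last first.
    by rewrite mxE ja andbF mul0r.
  by rewrite mxE !eqxx mul1r.
by rewrite mxE big1 // => j _; rewrite mxE (negPf ib) mul0r.
Qed.

Lemma hermitianE A (i j : 'I_n) : hermitian A -> A i j = conjc (A j i).
Proof. by move=> hA; rewrite -{1}hA !mxE. Qed.

Lemma hermitianD A B : hermitian A -> hermitian B -> hermitian (A + B).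
Proof. by move=> hA hB; rewrite /hermitian raddfD /= hA hB. Qed.

Lemma hermitianB A B : hermitian A -> hermitian B -> hermitian (A - B).
Proof. by move=> hA hB; rewrite /hermitian raddfB /= hA hB. Qed.

Lemma hermitianZ (x : R) A : hermitian A -> hermitian (x%:C%C *: A).
Proof. by move=> hA; rewrite /hermitian adjmxZ conjc_real hA. Qed.

Lemma hermitian0 : hermitian (0 : Mat).
Proof. exact: raddf0. Qed.

Lemma hermitian1 : hermitian (1%:M : Mat).
Proof. exact: adjmx1. Qed.

Lemma hermitian_sum (I : Type) (r : seq I) (P : pred I) (f : I -> Mat) :
  (forall i, P i -> hermitian (f i)) -> hermitian (\sum_(i <- r | P i) f i).
Proof.
move=> hf; elim/big_rec: _ => [|i B Pi hB]; first exact: hermitian0.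
exact: hermitianD (hf i Pi) hB.
Qed.

Lemma density_hermitian A : density A -> hermitian A.
Proof. by case=> [[]]. Qed.

Lemma hs_inner_hermitian_Im A B :
  hermitian A -> hermitian B -> complex.Im (hs_inner A B) = 0.
Proof.
move=> hA hB; apply: conjc_fixed_Im.
by rewrite /hs_inner hA -mxtrace_adjmx adjmxM hA hB mxtrace_mulC.
Qed.

End Adjoint.

Section Perturbation.
Variables (R : realType) (n : nat).
Notation Mat := 'M[R[i]]_n.
Implicit Types (A D : Mat) (v : 'cV[R[i]]_n).

Definition qform v A : R[i] := (adjmx v *m A *m v) 0 0.

Definition sqnormv v : R :=
  \sum_i (complex.Re (v i 0) ^+ 2 + complex.Im (v i 0) ^+ 2).

Definition mx_l1norm A : R :=
  \sum_i \sum_j (`|complex.Re (A i j)| + `|complex.Im (A i j)|).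

Lemma qformE v A : qform v A = \sum_i \sum_j conjc (v i 0) * A i j * v j 0.
Proof.
rewrite /qform mxE exchange_big /=; apply: eq_bigr => j _.
by rewrite mxE big_distrl /=; apply: eq_bigr => i _; rewrite !mxE.
Qed.

Lemma qformD v A B : qform v (A + B) = qform v A + qform v B.
Proof. by rewrite /qform mulmxDr mulmxDl mxE. Qed.

Lemma qformZ v z A : qform v (z *: A) = z * qform v A.
Proof. by rewrite /qform -scalemxAr -scalemxAl mxE. Qed.

Lemma qform1 v : qform v 1%:M = (sqnormv v)%:C%C.
Proof.
rewrite /qform mulmx1 mxE; apply: complex_ext; rewrite /= raddf_sum /=.
  by apply: eq_bigr => i _; rewrite !mxE; case: (v i 0) => a b /=; ring.
by rewrite big1 // => i _; rewrite !mxE; case: (v i 0) => a b /=; ring.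
Qed.

Lemma qform_hermitian_Im v A : hermitian A -> complex.Im (qform v A) = 0.
Proof.
move=> hA; apply: conjc_fixed_Im; rewrite qformE rmorph_sum exchange_big /=.
apply: eq_bigr => j _; rewrite rmorph_sum; apply: eq_bigr => i _.
by rewrite !rmorphM /= conjcK -(hermitianE i j hA); ring.
Qed.

Lemma sqnormv_ge v i :
  complex.Re (v i 0) ^+ 2 + complex.Im (v i 0) ^+ 2 <= sqnormv v.
Proof.
by rewrite /sqnormv (bigD1 i) //= lerDl sumr_ge0 // => j _; rewrite addr_ge0 ?sqr_ge0.
Qed.

Lemma sqnormv_ge0 v : 0 <= sqnormv v.
Proof. by apply: sumr_ge0 => i _; rewrite addr_ge0 ?sqr_ge0. Qed.

Lemma mx_l1norm_ge0 A : 0 <= mx_l1norm A.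
Proof. by do 2![apply: sumr_ge0 => ? _]; rewrite addr_ge0. Qed.

Lemma abs_cross_le (a b c d x y N : R) :
  a ^+ 2 + b ^+ 2 <= N -> c ^+ 2 + d ^+ 2 <= N ->
  `|x * (a * c + b * d) + y * (b * c - a * d)| <= (`|x| + `|y|) * N.
Proof.
move=> hab hcd.
have e1 : `|a * c + b * d| <= N.
  have := sqr_ge0 (a + c); have := sqr_ge0 (b + d).
  have := sqr_ge0 (a - c); have := sqr_ge0 (b - d).
  rewrite ler_norml; move=> *; apply/andP; split; nra.
have e2 : `|b * c - a * d| <= N.
  have := sqr_ge0 (b - c); have := sqr_ge0 (a + d).
  have := sqr_ge0 (b + c); have := sqr_ge0 (a - d).
  rewrite ler_norml; move=> *; apply/andP; split; nra.
rewrite (le_trans (ler_normD _ _)) // !normrM mulrDl.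
by rewrite lerD // ler_wpM2l.
Qed.

Lemma qform_Re_le v A : `|complex.Re (qform v A)| <= mx_l1norm A * sqnormv v.
Proof.
rewrite qformE raddf_sum /= mulr_suml (le_trans (ler_norm_sum _ _ _)) //.
apply: ler_sum => i _; rewrite raddf_sum /= mulr_suml.
rewrite (le_trans (ler_norm_sum _ _ _)) //; apply: ler_sum => j _.
have -> : complex.Re (conjc (v i 0) * A i j * v j 0) =
    complex.Re (A i j) * (complex.Re (v i 0) * complex.Re (v j 0)
                          + complex.Im (v i 0) * complex.Im (v j 0))
  + complex.Im (A i j) * (complex.Im (v i 0) * complex.Re (v j 0)
                          - complex.Re (v i 0) * complex.Im (v j 0)).
  by case: (A i j) => x y; case: (v i 0) => a b; case: (v j 0) => c d /=; ring.
exact: abs_cross_le (sqnormv_ge v i) (sqnormv_ge v j).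
Qed.

Lemma psd_scalar_add (c t : R) D : hermitian D -> `|t| * mx_l1norm D <= c ->
  psd (c%:C%C *: 1%:M + t%:C%C *: D).
Proof.
move=> hD ht; split; first by apply: hermitianD; apply: hermitianZ => //; exact: hermitian1.
move=> v; rewrite -/(qform v _) qformD !qformZ qform1 lecE raddfD /= !Im_realCM /=.
rewrite qform_hermitian_Im // !mulr0 mul0r !addr0 eqxx raddfD /= !Re_realCM /=.
have hq := qform_Re_le v D; have hN := sqnormv_ge0 v.
set q := complex.Re (qform v D) in hq *; set N := sqnormv v in hq hN *.
have h1 : `|t| * `|q| <= `|t| * (mx_l1norm D * N) by rewrite ler_wpM2l.
have h2 : `|t| * mx_l1norm D * N <= c * N by rewrite ler_wpM2r.
have h3 : - `|t * q| <= t * q := lerNnormlW (lexx _).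
rewrite normrM mulrA in h1 h3; lra.
Qed.

End Perturbation.

Section Expectations.
Variables (R : realType) (n k : nat) (W : 'I_k -> 'M[R[i]]_n).
Hypothesis hermW : forall l, hermitian (W l).
Notation Mat := 'M[R[i]]_n.
Implicit Types (rho : Mat) (r : 'rV[R]_k).

Definition expectations rho : 'rV[R]_k :=
  \row_l complex.Re (hs_inner (W l) rho).

Lemma hs_inner_scalar_add rho (x y : R) (A : Mat) : density rho ->
  complex.Re (hs_inner (x%:C%C *: 1%:M + y%:C%C *: A) rho)
  = x + y * complex.Re (hs_inner A rho).
Proof.
case=> _ tr1; rewrite hs_innerDl !hs_innerZl !conjc_real hs_inner1l tr1.
by rewrite mulr1 raddfD /= Re_realCM.
Qed.

Definition observable_sum r : Mat := \sum_l (2 * r 0 l)%:C%C *: W l.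

Definition quad_weight r : R := (1 + mx_l1norm (observable_sum r))^-1.

Definition quad_effect r (y : R) : Mat :=
  (1 / 2)%:C%C *: 1%:M + y%:C%C *: observable_sum r.

Definition quad_measurement r : seq Mat :=
  [:: quad_effect r (quad_weight r / 2); quad_effect r (- (quad_weight r / 2))].

Definition quad_score r (y : nat) : R :=
  (if y == 0%N then (quad_weight r)^-1 else - (quad_weight r)^-1)
  - \sum_l r 0 l ^+ 2.

Lemma quad_weight_gt0 r : 0 < quad_weight r.
Proof. by rewrite invr_gt0 ltr_wpDr ?mx_l1norm_ge0. Qed.

Lemma quad_weight_l1norm r : quad_weight r * mx_l1norm (observable_sum r) <= 1.
Proof.
have h0 := mx_l1norm_ge0 (observable_sum r).
by rewrite ler_pdivrMl ?ltr_wpDr //; lra.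
Qed.

Lemma measurement_quad r : measurement (quad_measurement r).
Proof.
have he := quad_weight_gt0 r; have hS := quad_weight_l1norm r.
have hermA : hermitian (observable_sum r).
  by apply: hermitian_sum => l _; exact: hermitianZ.
split.
  move=> [|[|y]] //= _; apply: psd_scalar_add => //; rewrite ?normrN ger0_norm; lra.
rewrite /= !big_ord_recl big_ord0 addr0 /= /quad_effect addrACA -!scalerDl -!raddfD /=.
by rewrite subrr -splitr raddf0 scale1r scale0r addr0.
Qed.

Lemma Re_hs_inner_observable_sum r rho :
  complex.Re (hs_inner (observable_sum r) rho) = \sum_l 2 * r 0 l * expectations rho 0 l.
Proof.
rewrite hs_inner_suml raddf_sum /=; apply: eq_bigr => l _.
by rewrite hs_innerZl conjc_real Re_realCM mxE.
Qed.

Lemma expected_quad_score r rho : density rho ->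
  expected_score quad_score quad_measurement r rho
  = \sum_l expectations rho 0 l ^+ 2 - \sum_l (expectations rho 0 l - r 0 l) ^+ 2.
Proof.
(* Generalizing [expectations rho] and [quad_weight r] and rewriting under patterns
   keeps [rewrite] from unfolding matrix expressions during matching. *)
move=> hrho; have := Re_hs_inner_observable_sum r rho.
move: (expectations rho) => G hA.
rewrite /expected_score /= !big_ord_recl big_ord0 addr0 /= /quad_score /quad_effect /=.
have := quad_weight_gt0 r; move: (quad_weight r) => e he.
rewrite [X in X * _ + _](hs_inner_scalar_add _ _ _ hrho).
rewrite [X in _ + X * _](hs_inner_scalar_add _ _ _ hrho) hA.
have -> : \sum_l G 0 l ^+ 2 - \sum_l (G 0 l - r 0 l) ^+ 2
        = \sum_l 2 * r 0 l * G 0 l - \sum_l r 0 l ^+ 2.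
  by rewrite -!sumrB; apply: eq_bigr => l _; ring.
field; lra.
Qed.

Lemma sum_sqr_sub_minP (G r : 'rV[R]_k) :
  (forall r' : 'rV[R]_k,
     \sum_l (G 0 l - r 0 l) ^+ 2 <= \sum_l (G 0 l - r' 0 l) ^+ 2) <-> r = G.
Proof.
have sum0 : \sum_l (G 0 l - G 0 l) ^+ 2 = 0.
  by rewrite big1 // => l _; rewrite subrr expr0n.
split=> [/(_ G)|-> r']; rewrite sum0; last by apply: sumr_ge0 => l _; exact: sqr_ge0.
move=> hle.
have /psumr_eq0P hsq : \sum_l (G 0 l - r 0 l) ^+ 2 = 0.
  by apply/eqP; rewrite eq_le hle sumr_ge0 // => l _; exact: sqr_ge0.
apply/rowP => l; apply/eqP; rewrite eq_sym -subr_eq0 -sqrf_eq0.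
by rewrite hsq // => i _; exact: sqr_ge0.
Qed.

Lemma elicitable_expectations : elicitable expectations.
Proof.
exists quad_score, quad_measurement; split; first exact: measurement_quad.
move=> rho hrho r; rewrite -(sum_sqr_sub_minP (expectations rho) r).
by split=> h r'; move: (h r'); rewrite !expected_quad_score // lerD2l lerN2.
Qed.

Lemma identifiable_expectations : identifiable expectations.
Proof.
move=> r _; exists (fun l => W l - (r 0 l)%:C%C *: 1%:M); split.
  by move=> l; apply: hermitianB => //; apply: hermitianZ; exact: hermitian1.
move=> rho hrho; have [_ tr1] := hrho.
have hV l : hs_inner (W l - (r 0 l)%:C%C *: 1%:M) rho
            = hs_inner (W l) rho - (r 0 l)%:C%C.
  by rewrite hs_innerBl hs_innerZl hs_inner1l tr1 conjc_real mulr1.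
split=> [hE l | hV0].
  rewrite hV -hE; apply/eqP; rewrite subr_eq0; apply/eqP; apply: complex_ext.
    by rewrite mxE.
  by rewrite hs_inner_hermitian_Im //; exact: density_hermitian.
by apply/rowP => l; rewrite mxE; move/eqP: (hV0 l); rewrite hV subr_eq0 => /eqP ->.
Qed.

End Expectations.

Section HermitianBasis.
Variables (R : realType) (n : nat).
Notation Mat := 'M[R[i]]_n.
Implicit Types (a b : 'I_n) (D : Mat).

(* An unnormalised generalised Gell-Mann basis of Herm(C^n) over R. *)
Definition herm_basis a b : Mat :=
  if a == b then delta_mx a a
  else if (a < b)%N then delta_mx a b + delta_mx b a
  else 'i%C *: delta_mx a b - 'i%C *: delta_mx b a.

Lemma hermitian_herm_basis a b : hermitian (herm_basis a b).
Proof.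
rewrite /herm_basis /hermitian; case: eqP => [->|_]; first exact: adjmx_delta.
case: ifP => _; first by rewrite raddfD /= !adjmx_delta addrC.
by rewrite raddfB /= !adjmxZ !adjmx_delta conjci !scaleNr opprK addrC.
Qed.

Lemma Re_hs_inner_herm_basis_diag a D :
  complex.Re (hs_inner (herm_basis a a) D) = complex.Re (D a a).
Proof. by rewrite /herm_basis eqxx hs_inner_delta. Qed.

Lemma Re_hs_inner_herm_basis_lt a b D : hermitian D -> (a < b)%N ->
  complex.Re (hs_inner (herm_basis a b) D) = 2 * complex.Re (D a b).
Proof.
move=> hD ab; rewrite /herm_basis (ord_ltn_eqF ab) ab hs_innerDl !hs_inner_delta.
by rewrite (hermitianE b a hD); case: (D a b) => x y /=; ring.
Qed.

Lemma Re_hs_inner_herm_basis_gt a b D : hermitian D -> (b < a)%N ->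
  complex.Re (hs_inner (herm_basis a b) D) = 2 * complex.Im (D a b).
Proof.
move=> hD ba; rewrite /herm_basis (ord_gtn_eqF ba) ltnNge (ltnW ba) /=.
rewrite hs_innerBl !hs_innerZl !hs_inner_delta conjci (hermitianE b a hD).
by case: (D a b) => x y /=; ring.
Qed.

Lemma hermitian_coords_eq0 D : hermitian D ->
  (forall a b, complex.Re (hs_inner (herm_basis a b) D) = 0) -> D = 0.
Proof.
move=> hD hc; apply/matrixP => a b; rewrite mxE.
have [ab|ba|/val_inj <-] := ltngtP a b.
- have := hc a b; rewrite (Re_hs_inner_herm_basis_lt hD ab) => hab.
  have := hc b a; rewrite (Re_hs_inner_herm_basis_gt hD ab) (hermitianE b a hD) => hba.
  by move: hab hba; case: (D a b) => x y /= hx hy; apply: complex_ext => /=; lra.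
- have := hc a b; rewrite (Re_hs_inner_herm_basis_gt hD ba) => hab.
  have := hc b a; rewrite (Re_hs_inner_herm_basis_lt hD ba) (hermitianE b a hD) => hba.
  by move: hab hba; case: (D a b) => x y /= hx hy; apply: complex_ext => /=; lra.
- have := hc a a; rewrite Re_hs_inner_herm_basis_diag => hre.
  by apply: complex_ext => //; apply: conjc_fixed_Im; rewrite -hermitianE.
Qed.

(* The coordinate of the pair (0, 0) is dropped: on densities the trace fixes it. *)
Definition basis_index : {set 'I_n * 'I_n} := [set p : 'I_n * 'I_n | (p.1 + p.2 != 0)%N].

Lemma card_basis_index : #|basis_index| = (n ^ 2 - 1)%N.
Proof.
rewrite /basis_index; case: n => [|m]; first by rewrite eq_card0 // => -[[]].
have -> : [set p : 'I_m.+1 * 'I_m.+1 | (p.1 + p.2 != 0)%N] = [set~ (ord0, ord0)].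
  by apply/setP => -[a b]; rewrite !inE xpair_eqE -!val_eqE /= addn_eq0.
by rewrite cardsC1 card_prod card_ord mulnn subn1.
Qed.

Lemma traceless_coords_eq0 D : hermitian D -> \tr D = 0 ->
  (forall p, p \in basis_index ->
     complex.Re (hs_inner (herm_basis p.1 p.2) D) = 0) -> D = 0.
Proof.
move=> hD trD hc; apply: hermitian_coords_eq0 => // a b.
have [abI|] := boolP ((a, b) \in basis_index); first exact: hc abI.
rewrite inE /= negbK addn_eq0 => /andP [/eqP a0 /eqP b0].
have -> : b = a by apply/val_inj; rewrite /= a0 b0.
rewrite Re_hs_inner_herm_basis_diag.
have /(congr1 (@complex.Re R)) : \tr D = 0 := trD.
rewrite /mxtrace (bigD1 a) //= raddfD raddf_sum /= big1 ?addr0 // => i ia.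
have := hc (i, i); rewrite Re_hs_inner_herm_basis_diag; apply.
by rewrite inE /= addn_eq0 andbb; apply: contra ia => /eqP i0; apply/eqP/val_inj; rewrite /= i0.
Qed.

End HermitianBasis.

Arguments herm_basis {R n}.

Section UpperBound.
Variables (R : realType) (n : nat).
Notation Mat := 'M[R[i]]_n.
Implicit Types (rho sigma : Mat).

Lemma k_elicitable_of_injective k (G : Mat -> 'rV[R]_k) (RR : Type) (Gamma : Mat -> RR) :
  elicitable G -> identifiable G ->
  (forall rho sigma, density rho -> density sigma -> G rho = G sigma -> rho = sigma) ->
  k_elicitable Gamma k.
Proof.
move=> elicG identG injG.
pose preimage r := epsilon (inhabits 0) (fun rho => density rho /\ G rho = r).
exists G, (fun r => Gamma (preimage r)); do 2!split=> //.
move=> rho hrho.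
have [hpre Gpre] := epsilon_spec (inhabits 0) (fun s => density s /\ G s = G rho)
                      (ex_intro _ rho (conj hrho erefl)).
by rewrite /preimage (injG _ _ hpre hrho Gpre).
Qed.

Definition basis_family (l : 'I_#|basis_index n|) : Mat :=
  herm_basis (enum_val l).1 (enum_val l).2.

Lemma expectations_basis_inj rho sigma : density rho -> density sigma ->
  expectations basis_family rho = expectations basis_family sigma -> rho = sigma.
Proof.
move=> hrho hsigma /rowP hE; apply/eqP; rewrite -subr_eq0; apply/eqP.
apply: traceless_coords_eq0.
- by apply: hermitianB; exact: density_hermitian.
- by rewrite raddfB /= hrho.2 hsigma.2 subrr.
move=> p pI; move: (hE (enum_rank_in pI p)); rewrite !mxE /basis_family enum_rankK_in //.
by rewrite linearB raddfB /= => ->; rewrite subrr.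
Qed.

Lemma k_elicitable_upper (RR : Type) (Gamma : Mat -> RR) :
  k_elicitable Gamma (n ^ 2 - 1).
Proof.
have hermB l : hermitian (basis_family l) by exact: hermitian_herm_basis.
rewrite -card_basis_index.
apply: (k_elicitable_of_injective _ (elicitable_expectations hermB)).
  exact: identifiable_expectations.
exact: expectations_basis_inj.
Qed.

End UpperBound.

Lemma exists_nonzero_kernel (F : fieldType) p q (f : {linear 'rV[F]_p -> 'rV[F]_q}) :
  (q < p)%N -> exists2 u, u != 0 & f u = 0.
Proof.
move=> lt_qp; have : kermx (lin1_mx f) != 0.
  rewrite kermx_eq0 -row_leq_rank -ltnNge (leq_ltn_trans (rank_leq_col _)) //.
case/rowV0Pn=> u /sub_kermxP uK u0; exists u => //.
by rewrite -mul_rV_lin1.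
Qed.

Section LowerBound.
Variables (R : realType) (n : nat).
Notation Mat := 'M[R[i]]_n.
Implicit Types (P Q : 'M[R]_n) (D rho : Mat).

(* A real-linear injection of 'M[R]_n into Herm(C^n): it reduces the dimension
   count to linear algebra over R. *)
Definition herm_of_real P : Mat := \matrix_(i, j)
  (if i == j then (P i i)%:C%C
   else if (i < j)%N then (P i j)%:C%C + 'i%C * (P j i)%:C%C
   else (P j i)%:C%C - 'i%C * (P i j)%:C%C).

Lemma hermitian_herm_of_real P : hermitian (herm_of_real P).
Proof.
apply/matrixP => i j; rewrite !mxE eq_sym.
have [ij|ji|/val_inj ->] := ltngtP i j.
- by rewrite (ord_ltn_eqF ij); apply: complex_ext => /=; ring.
- by rewrite (ord_gtn_eqF ji); apply: complex_ext => /=; ring.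
- by rewrite eqxx conjc_real.
Qed.

Lemma herm_of_realP (a : R) P Q :
  herm_of_real (a *: P + Q) = a%:C%C *: herm_of_real P + herm_of_real Q.
Proof.
apply/matrixP => i j; rewrite !mxE.
by case: ifP => _; [|case: ifP => _]; apply: complex_ext => /=; ring.
Qed.

Lemma herm_of_real_eq0 P : herm_of_real P = 0 -> P = 0.
Proof.
move/matrixP=> h0; apply/matrixP => i j; rewrite mxE.
move: (h0 i j) (h0 j i); rewrite !mxE eq_sym.
have [ij|ji|/val_inj ->] := ltngtP i j.
- by rewrite (ord_gtn_eqF ij) => /(congr1 (@complex.Re R)) /= hx _; lra.
- by rewrite (ord_ltn_eqF ji) => /(congr1 (@complex.Im R)) /= hy _; lra.
- by rewrite eqxx => /(congr1 (@complex.Re R)).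
Qed.

Definition herm_expectations k (V : 'I_k -> Mat) (u : 'rV[R]_(n * n)) : 'rV[R]_k :=
  expectations V (herm_of_real (vec_mx u)).

Lemma herm_expectations_is_linear k (V : 'I_k -> Mat) : linear (herm_expectations V).
Proof.
move=> a u v; apply/rowP => l; rewrite !mxE linearP herm_of_realP.
by rewrite linearD linearZ raddfD /= Re_realCM.
Qed.

HB.instance Definition _ k (V : 'I_k -> Mat) := GRing.isLinear.Build R
  'rV[R]_(n * n) 'rV[R]_k *:%R (herm_expectations V) (herm_expectations_is_linear V).

Lemma exists_hermitian_orthogonal k (V : 'I_k -> Mat) : (k < n * n)%N ->
  exists D, [/\ hermitian D, D != 0 & forall l, complex.Re (hs_inner (V l) D) = 0].
Proof.
case/(exists_nonzero_kernel (herm_expectations V)) => u u0 /rowP Vu.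
exists (herm_of_real (vec_mx u)); split.
- exact: hermitian_herm_of_real.
- apply: contra u0 => /eqP/herm_of_real_eq0/(congr1 mxvec).
  by rewrite vec_mxK linear0 => ->.
- by move=> l; move: (Vu l); rewrite !mxE.
Qed.

Lemma exists_traceless_orthogonal k (V : 'I_k -> Mat) :
  (forall l, hermitian (V l)) -> (k.+1 < n * n)%N ->
  exists D, [/\ hermitian D, D != 0, \tr D = 0 & forall l, hs_inner (V l) D = 0].
Proof.
move=> hermV /(exists_hermitian_orthogonal (fun l => oapp V 1%:M (unlift ord_max l))).
case=> D [hD D0 orthD]; exists D; split=> //.
  apply: complex_ext; last by rewrite -hs_inner1l hs_inner_hermitian_Im //; exact: hermitian1.
  by move: (orthD ord_max); rewrite unlift_none hs_inner1l.
move=> l; apply: complex_ext; last by rewrite hs_inner_hermitian_Im.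
by move: (orthD (lift ord_max l)); rewrite liftK.
Qed.

Lemma k_elicitable_flat (RR : Type) (Gamma : Mat -> RR) k rho0 :
  k_elicitable Gamma k -> (k.+1 < n * n)%N -> density rho0 ->
  exists D, [/\ hermitian D, D != 0, \tr D = 0 &
    forall x : R, density (rho0 + x%:C%C *: D) -> Gamma (rho0 + x%:C%C *: D) = Gamma rho0].
Proof.
case=> G [psi [_ [identG GammaE]]] lt_kn hrho0.
have [V [hermV hV]] := identG (G rho0) (ex_intro _ rho0 (conj hrho0 erefl)).
have [D [hD D0 trD orthD]] := exists_traceless_orthogonal hermV lt_kn.
exists D; split=> // x hx; rewrite !GammaE //; congr psi.
apply/(hV _ hx) => l; rewrite linearD linearZ /= orthD mulr0 addr0.
exact: (proj1 (hV _ hrho0)).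
Qed.

Lemma density_mixed_add D (x : R) : (0 < n)%N -> hermitian D -> \tr D = 0 ->
  `|x| * mx_l1norm D <= n%:R^-1 ->
  density ((n%:R^-1)%:C%C *: 1%:M + x%:C%C *: D).
Proof.
move=> n_gt0 hD trD hx; split; first exact: psd_scalar_add.
rewrite raddfD /= !mxtraceZ trD mulr0 addr0 mxtrace1.
have -> : (n%:R : R[i]) = (n%:R : R)%:C%C by rewrite rmorph_nat.
by rewrite -rmorphM /= mulVf ?pnatr_eq0 -?lt0n.
Qed.

Lemma convex_comb_segment rho D (s t : R) :
  s%:C%C *: rho + (1 - s)%:C%C *: (rho + t%:C%C *: D)
  = rho + ((1 - s) * t)%:C%C *: D.
Proof.
apply/matrixP => i j; rewrite !mxE.
case: (rho i j) => a b; case: (D i j) => c d.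
by apply: complex_ext => /=; ring.
Qed.

Lemma k_elicitable_lower (F : Mat -> R) k :
  strictly_convex F -> k_elicitable F k -> (n ^ 2 - 1 <= k)%N.
Proof.
move=> convF elicF; rewrite leqNgt; apply/negP => lt_k.
have lt_kn : (k.+1 < n * n)%N by rewrite -mulnn in lt_k; lia.
have n_gt0 : (0 < n)%N by case: n lt_kn.
set c : R := n%:R^-1; set mixed : Mat := c%:C%C *: 1%:M.
have c_gt0 : 0 < c by rewrite invr_gt0 ltr0n.
have mixedE : density mixed.
  have := @density_mixed_add 0 0 n_gt0 (hermitian0 _ _) (mxtrace0 _ _).
  by rewrite scaler0 addr0 normr0 mul0r; apply; exact: ltW.
have [D [hD D0 trD flat]] := k_elicitable_flat elicF lt_kn mixedE.
have S_ge0 := mx_l1norm_ge0 D; set t := c / (1 + mx_l1norm D).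
have t_gt0 : 0 < t by rewrite divr_gt0 // ltr_wpDr.
have tS_le : t * mx_l1norm D <= c by rewrite mulrAC ler_pdivrMr ?ltr_wpDr //; nra.
have near x : 0 <= x <= t -> density (mixed + x%:C%C *: D).
  case/andP=> x_ge0 x_le; apply: density_mixed_add => //.
  by rewrite ger0_norm // (le_trans _ tS_le) // ler_wpM2r.
have mixed_neq : mixed <> mixed + t%:C%C *: D.
  move/eqP; rewrite -subr_eq0 opprD addNKr oppr_eq0 scaler_eq0 (negbTE D0) orbF.
  by move/eqP/(congr1 (@complex.Re R)) => /= t0; lra.
have half : 0 < (1 / 2 : R) < 1 by apply/andP; split; lra.
have near_t : density (mixed + t%:C%C *: D) by apply: near; rewrite lexx ltW.
have near_half : density (mixed + ((1 - 1 / 2) * t)%:C%C *: D).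
  by apply: near; apply/andP; split; lra.
have := convF _ _ _ mixedE near_t mixed_neq half.
by rewrite convex_comb_segment !flat //; lra.
Qed.

End LowerBound.

Theorem theorem6p5 (R : realType) (n : nat) (F : 'M[R[i]]_n -> R) :
  strictly_convex F -> elicQ_is F (n ^ 2 - 1)%N.
Proof.
move=> convF; split; first exact: k_elicitable_upper.
by move=> k; exact: k_elicitable_lower.
Qed.
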